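(* Let $R$ be the ring of upper triangular $2\times 2$ matrices over the field $\mathbb{F}_2$ (a non-commutative ring with unity of order $8$ having exactly $6$ zero-divisors, counting $0$). Consider the (left) projective line $P(R)$. Then: (i) $P(R)$ has exactly $18$ points; (ii) exactly $14$ of these points have a representative pair $(a,b)$ in which $a$ or $b$ is a unit of $R$; (iii) every point of $P(R)$ has exactly $9$ neighbours other than itself; (iv) any two distant points of $P(R)$ have exactly $4$ common neighbours; (v) any three pairwise distant points of $P(R)$ have no common neighbour; (vi) the maximum cardinality of a set of pairwise distant points of $P(R)$ is $3$. *)

From mathcomp Require Import all_boot all_order all_algebra.
Set Implicit Arguments. Unset Strict Implicit. Unset Printing Implicit Defensive.
Import GRing.Theory.
Local Open Scope ring_scope.

(* Ambient ring: 2x2 matrices over F_2; R is the subring of upper triangular ones. *)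
Definition T := 'M['F_2]_2.

Definition upper (x : T) : bool := x ord_max ord0 == 0.

Definition unitR (x : T) : bool :=
  upper x && [exists y : T, [&& upper y, x * y == 1 & y * x == 1]].

Definition invertible2 (a b c d : T) : bool :=
  [exists e : T, [exists f : T, [exists g : T, [exists h : T,
    [&& upper e, upper f, upper g, upper h,
        a * e + b * g == 1, a * f + b * h == 0,
        c * e + d * g == 0, c * f + d * h == 1,
        e * a + f * c == 1, e * b + f * d == 0,
        g * a + h * c == 0 & g * b + h * d == 1]]]]].

Definition admissible (a b : T) : bool :=
  [&& upper a, upper b &
      [exists c : T, [exists d : T, [&& upper c, upper d & invertible2 a b c d]]]].

Definition cyc (a b : T) : {set T * T} :=
  [set (r * a, r * b) | r in [pred r : T | upper r]].

Definition PR : {set {set T * T}} :=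
  [set cyc p.1 p.2 | p in [pred p : T * T | admissible p.1 p.2]].

Definition distant (P Q : {set T * T}) : bool :=
  [exists a : T, [exists b : T, [exists c : T, [exists d : T,
    [&& admissible a b, admissible c d, cyc a b == P, cyc c d == Q &
        invertible2 a b c d]]]]].

Definition nbrs (P : {set T * T}) : {set {set T * T}} :=
  [set Q in PR | ~~ distant P Q & Q != P].

Definition unit_rep_points : {set {set T * T}} :=
  [set P in PR | [exists a : T, [exists b : T,
     [&& admissible a b, cyc a b == P & unitR a || unitR b]]]].

Definition pairwise_distant (S : {set {set T * T}}) : Prop :=
  forall P Q, P \in S -> Q \in S -> P != Q -> distant P Q.

From mathcomp Require Import all_boot all_order all_algebra.
Local Open Scope ring_scope.

(* The ring R is isomorphic to bool^3 with the product of upper triangular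
   matrices, via (a, b, d) |-> [[a, b], [0, d]].  Along this isomorphism, units,
   invertibility in GL_2(R), admissibility, the submodules R(a, b) and distance
   all become boolean functions on finite types, decided by evaluation.  There
   are 36 admissible pairs, two for each point, so one representative per point
   turns every cardinality in the statement into a count over an explicit list
   of 18 pairs, and (iii)-(vi) into finite properties of the distance graph on
   these 18 vertices.  For (vi): the points of (1, 0), (0, 1), (1, 1) are
   pairwise distant, and the graph has no four pairwise adjacent vertices. *)

Lemma card_sub_map (I : eqType) (A : finType) (f : I -> A) (s : seq I) (S : {pred A}) :
  uniq s -> {in s &, injective f} -> {subset S <= map f s} ->
  #|S| = count (fun i => f i \in S) s.
Proof.
move=> s_uniq f_inj S_sub; rewrite -size_filter -(size_map f).
have /card_uniqP <- : uniq (map f [seq i <- s | f i \in S]).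
  rewrite map_inj_in_uniq ?filter_uniq //.
  by apply: sub_in2 f_inj => i; rewrite mem_filter => /andP[].
apply: eq_card => x; apply/idP/mapP => [x_S | [i]]; last first.
  by rewrite mem_filter => /andP[? _] ->.
by have /mapP[i i_s ex] := S_sub x x_S; exists i; rewrite // mem_filter -ex x_S.
Qed.

Definition U := (bool * bool * bool)%type.

Definition b2F (b : bool) : 'F_2 := if b then 1 else 0.

Definition emb (u : U) : T :=
  let: (a, b, d) := u in
  \matrix_(i < 2, j < 2) if i == ord0 then (if j == ord0 then b2F a else b2F b)
                         else (if j == ord0 then 0 else b2F d).

Definition addU (u v : U) : U :=
  let: (a, b, d) := u in let: (a', b', d') := v in (xorb a a', xorb b b', xorb d d').

Definition mulU (u v : U) : U :=
  let: (a, b, d) := u in let: (a', b', d') := v in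
  (a && a', xorb (a && b') (b && d'), d && d').

Definition zeroU : U := (false, false, false).
Definition oneU : U := (true, false, true).

Lemma emb_add u v : emb (addU u v) = emb u + emb v.
Proof.
case: u => [[a b] d]; case: v => [[a' b'] d']; apply/matrixP => i j; rewrite !mxE.
case: i => [[|[|?]] ?] //; case: j => [[|[|?]] ?] //=;
by case: a; case: b; case: d; case: a'; case: b'; case: d'; apply: val_inj.
Qed.

Lemma emb_mul u v : emb (mulU u v) = emb u * emb v.
Proof.
case: u => [[a b] d]; case: v => [[a' b'] d'].
apply/matrixP => i j; rewrite -mulmxE !mxE big_ord_recr big_ord1 /= !mxE.
case: i => [[|[|?]] ?] //; case: j => [[|[|?]] ?] //=;
by case: a; case: b; case: d; case: a'; case: b'; case: d'; apply: val_inj.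
Qed.

Lemma emb0 : emb zeroU = 0.
Proof.
apply/matrixP => i j; rewrite !mxE.
by case: i => [[|[|?]] ?] //; case: j => [[|[|?]] ?] //=; apply: val_inj.
Qed.

Lemma emb1 : emb oneU = 1.
Proof.
apply/matrixP => i j; rewrite !mxE.
by case: i => [[|[|?]] ?] //; case: j => [[|[|?]] ?] //=; apply: val_inj.
Qed.

Lemma emb_inj : injective emb.
Proof.
have b2F_inj : injective b2F by case; case => // /(congr1 val).
move=> [[a b] d] [[a' b'] d'] E.
have := congr1 (fun M : T => M ord0 ord0) E; have := congr1 (fun M : T => M ord0 ord_max) E.
have := congr1 (fun M : T => M ord_max ord_max) E.
by rewrite /= !mxE /= => /b2F_inj -> /b2F_inj -> /b2F_inj ->.
Qed.

Lemma upper_emb u : upper (emb u).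
Proof. by case: u => [[a b] d]; rewrite /upper mxE. Qed.

Lemma upperP x : upper x -> exists u, x = emb u.
Proof.
have ord2E (i : 'I_2) : i = ord0 \/ i = ord_max.
  by case: i => [[|[|k]] Hk]; [left | right |] => //; apply: val_inj.
have F2E (z : 'F_2) : z = b2F (z == 1) by case: z => [[|[|k]] Hk] //; apply: val_inj.
move/eqP=> lower0; exists (x ord0 ord0 == 1, x ord0 ord_max == 1, x ord_max ord_max == 1).
apply/matrixP => i j; rewrite mxE.
by case: (ord2E i) => ->; case: (ord2E j) => -> /=; rewrite -?F2E.
Qed.

Definition enumU : seq U :=
  [seq (ab, d) | ab <- [seq (a, b) | a <- [:: true; false], b <- [:: true; false]],
                 d <- [:: true; false]].
Definition enumUU : seq (U * U) := [seq (u, v) | u <- enumU, v <- enumU].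

Lemma mem_enumU u : u \in enumU.
Proof. by case: u => [[[] []] []]. Qed.

Lemma mem_enumUU p : p \in enumUU.
Proof. by case: p => u v; apply/allpairsP; exists (u, v); rewrite !mem_enumU. Qed.

Definition lincombU (x y z w v : U) : bool := addU (mulU x y) (mulU z w) == v.

Lemma emb_lincomb x y z w v :
  (emb x * emb y + emb z * emb w == emb v) = lincombU x y z w v.
Proof. by rewrite -!emb_mul -emb_add (inj_eq emb_inj). Qed.

Definition inverse2_eqns (a b c d e f g h : U) : bool :=
  [&& lincombU a e b g oneU, lincombU a f b h zeroU,
      lincombU c e d g zeroU, lincombU c f d h oneU,
      lincombU e a f c oneU, lincombU e b f d zeroU,
      lincombU g a h c zeroU & lincombU g b h d oneU].

(* The first column [(e, g)] of the inverse is searched first to prune the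
   search; [if] instead of [&&] keeps the pruning under call-by-value. *)
Definition invertible2U (a b c d : U) : bool :=
  has (fun e => has (fun g =>
    if lincombU a e b g oneU && lincombU c e d g zeroU then
      has (fun f => has (fun h => inverse2_eqns a b c d e f g h) enumU) enumU
    else false) enumU) enumU.

Lemma invertible2UP a b c d :
  reflect (exists e f g h, inverse2_eqns a b c d e f g h) (invertible2U a b c d).
Proof.
apply: (iffP idP) => [/hasP[e _ /hasP[g _]] | [e [f [g [h eqns]]]]].
  case: ifP => // _ /hasP[f _ /hasP[h _ eqns]]; by exists e, f, g, h.
apply/hasP; exists e; rewrite ?mem_enumU //; apply/hasP; exists g; rewrite ?mem_enumU //.
have /and3P[-> _ /andP[-> _]] := eqns; apply/hasP; exists f; rewrite ?mem_enumU //.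
by apply/hasP; exists h; rewrite ?mem_enumU.
Qed.

Lemma invertible2_emb a b c d :
  invertible2 (emb a) (emb b) (emb c) (emb d) = invertible2U a b c d.
Proof.
rewrite /invertible2 /inverse2_eqns -emb0 -emb1.
apply/existsP/invertible2UP => [[e] | [e [f [g [h eqns]]]]].
  case/existsP=> f /existsP[g /existsP[h /and5P[/upperP[e' ->] /upperP[f' ->]]]].
  move=> /upperP[g' ->] /upperP[h' ->]; rewrite !emb_lincomb => eqns.
  by exists e', f', g', h'.
exists (emb e); apply/existsP; exists (emb f); apply/existsP; exists (emb g).
by apply/existsP; exists (emb h); rewrite !upper_emb !emb_lincomb.
Qed.

Definition invertible_rowsU (p q : U * U) : bool := invertible2U p.1 p.2 q.1 q.2.

Definition admissibleU (p : U * U) : bool := has (invertible_rowsU p) enumUU.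

Definition admissible_pairs : seq (U * U) :=
  Eval vm_compute in [seq p <- enumUU | admissibleU p].

Lemma admissible_emb p : admissible (emb p.1) (emb p.2) = (p \in admissible_pairs).
Proof.
have -> : admissible_pairs = [seq p <- enumUU | admissibleU p] by vm_compute.
rewrite mem_filter mem_enumUU andbT /admissible !upper_emb.
apply/existsP/hasP => [[c] | [[c d] _ inv]].
  case/existsP=> d /and3P[/upperP[c' ->] /upperP[d' ->]].
  by rewrite invertible2_emb => inv; exists (c', d'); rewrite ?mem_enumUU.
by exists (emb c); apply/existsP; exists (emb d); rewrite !upper_emb invertible2_emb.
Qed.

Lemma admissibleP x y :
  admissible x y -> exists2 p, p \in admissible_pairs & (x, y) = (emb p.1, emb p.2).
Proof.
move=> adm; have /and3P[/upperP[a ea] /upperP[b eb] _] := adm.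
by exists (a, b); rewrite -?ea -?eb // -admissible_emb /= -ea -eb.
Qed.

Definition cycU (p : U * U) : {set T * T} := cyc (emb p.1) (emb p.2).

Definition orbitU (p : U * U) : seq (U * U) :=
  [seq (mulU r p.1, mulU r p.2) | r <- enumU].

Lemma mem_cycU p q : ((emb q.1, emb q.2) \in cycU p) = (q \in orbitU p).
Proof.
apply/imsetP/mapP => [[r /upperP[r' ->] [e1 e2]] | [r _ ->]].
  by exists r'; rewrite ?mem_enumU //; case: q e1 e2 => q1 q2 /= e1 e2;
    congr (_, _); apply: emb_inj; rewrite emb_mul.
by exists (emb r); rewrite ?inE ?upper_emb // !emb_mul.
Qed.

Lemma cycU_emb p x : x \in cycU p -> exists q, x = (emb q.1, emb q.2).
Proof.
case/imsetP=> r /upperP[r' ->] ->.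
by exists (mulU r' p.1, mulU r' p.2); rewrite !emb_mul.
Qed.
Arguments cycU_emb {p x}.

Definition same_cycU (p p' : U * U) : bool :=
  all (fun q => q \in orbitU p') (orbitU p) && all (fun q => q \in orbitU p) (orbitU p').

Lemma eq_cycU p p' : (cycU p == cycU p') = same_cycU p p'.
Proof.
apply/eqP/andP => [E | [/allP sub /allP sub']].
  by split; apply/allP => q; rewrite -!mem_cycU E.
have memE q : ((emb q.1, emb q.2) \in cycU p) = ((emb q.1, emb q.2) \in cycU p').
  by rewrite !mem_cycU; apply/idP/idP => [/sub | /sub'].
apply/setP => x; apply/idP/idP => x_in; have [q ex] := cycU_emb x_in;
by rewrite ex in x_in *; rewrite ?memE // -memE.
Qed.

Definition point_repsU (p : U * U) : seq (U * U) :=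
  [seq p' <- admissible_pairs | same_cycU p' p].

Lemma mem_point_repsU p p' :
  (p' \in point_repsU p) = (p' \in admissible_pairs) && (cycU p' == cycU p).
Proof. by rewrite mem_filter eq_cycU andbC. Qed.

Lemma point_repsU_cycU p q : cycU p = cycU q -> point_repsU p = point_repsU q.
Proof. by move=> E; apply: eq_filter => p'; rewrite -!eq_cycU E. Qed.

Definition canonU (p : U * U) : U * U := head p (point_repsU p).

Lemma canonU_point_reps p : p \in admissible_pairs -> canonU p \in point_repsU p.
Proof.
rewrite /canonU; case E: (point_repsU p) => [|p' s] p_adm; last exact: mem_head.
by have := mem_point_repsU p p; rewrite E p_adm eqxx.
Qed.
Arguments canonU_point_reps {p}.

(* Kept as a literal: as the unevaluated [undup] expression, conversion problems
   such as [p \in reps] (attempted by [done]) would recompute every [canonU]. *)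
Definition reps : seq (U * U) :=
  Eval vm_compute in undup (map canonU admissible_pairs).

Lemma repsE : reps = undup (map canonU admissible_pairs).
Proof. by vm_compute. Qed.

Lemma repsP p : reflect (exists2 p0, p0 \in admissible_pairs & p = canonU p0) (p \in reps).
Proof. by rewrite repsE mem_undup; apply: mapP. Qed.

Lemma cycU_canonU p : p \in admissible_pairs -> cycU (canonU p) = cycU p.
Proof. by move/canonU_point_reps; rewrite mem_point_repsU => /andP[_ /eqP]. Qed.

Lemma reps_admissible p : p \in reps -> p \in admissible_pairs.
Proof. by case/repsP=> p0 /canonU_point_reps + ->; rewrite mem_point_repsU => /andP[]. Qed.

Lemma cycU_inj : {in reps &, injective cycU}.
Proof.
move=> _ _ /repsP[p p_adm ->] /repsP[q q_adm ->].
rewrite !cycU_canonU // => /point_repsU_cycU E; rewrite /canonU E.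
by have := canonU_point_reps q_adm; rewrite /canonU; case: (point_repsU q).
Qed.

Lemma cycU_PR p : p \in admissible_pairs -> cycU p \in PR.
Proof.
move=> p_adm; apply/imsetP; exists (emb p.1, emb p.2) => //.
by rewrite inE /= admissible_emb.
Qed.

Lemma PR_reps P : P \in PR -> exists2 p, p \in reps & P = cycU p.
Proof.
case/imsetP=> -[x y] /admissibleP[p p_adm [-> ->]] ->.
by exists (canonU p); [apply/repsP; exists p | rewrite cycU_canonU].
Qed.

Lemma card_points (S : {set {set T * T}}) (a : pred (U * U)) :
  S \subset PR -> {in reps, forall p, (cycU p \in S) = a p} -> #|S| = count a reps.
Proof.
move/subsetP=> S_PR Sa; rewrite -(eq_in_count Sa).
apply: card_sub_map; first by rewrite repsE undup_uniq.
  exact: cycU_inj.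
by move=> P /S_PR /PR_reps[p p_rep ->]; apply: map_f.
Qed.

Definition distantU (p q : U * U) : bool :=
  has (fun p' => has (invertible_rowsU p') (point_repsU q)) (point_repsU p).

Lemma distant_cycU p q : distant (cycU p) (cycU q) = distantU p q.
Proof.
apply/existsP/hasP => [[a] | [p' p'_cls /hasP[q' q'_cls dist]]].
  case/existsP=> b /existsP[c /existsP[d /and5P[/admissibleP[p' p'_adm [-> ->]]]]].
  case/admissibleP=> q' q'_adm [-> ->] ep eq_q inv.
  exists p'; first by rewrite mem_point_repsU p'_adm.
  apply/hasP; exists q'; first by rewrite mem_point_repsU q'_adm.
  by rewrite /invertible_rowsU -invertible2_emb.
move: p'_cls q'_cls; rewrite !mem_point_repsU => /andP[p'_adm ep] /andP[q'_adm eq_q].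
exists (emb p'.1); apply/existsP; exists (emb p'.2); apply/existsP; exists (emb q'.1).
apply/existsP; exists (emb q'.2); apply/and5P; split => //.
- by rewrite admissible_emb.
- by rewrite admissible_emb.
- by rewrite invertible2_emb.
Qed.

Definition unitU (u : U) : bool :=
  has (fun v => (mulU u v == oneU) && (mulU v u == oneU)) enumU.

Lemma unitR_emb u : unitR (emb u) = unitU u.
Proof.
rewrite /unitR upper_emb -emb1; apply/existsP/hasP => [[v] | [v _ inv]].
  by case/and3P=> /upperP[v' ->]; rewrite -!emb_mul !(inj_eq emb_inj) => *; exists v';
    rewrite ?mem_enumU //; apply/andP.
by exists (emb v); rewrite upper_emb -!emb_mul !(inj_eq emb_inj).
Qed.

Definition has_unit_repU (p : U * U) : bool :=
  has (fun p' => unitU p'.1 || unitU p'.2) (point_repsU p).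

Lemma unit_rep_points_cycU p : (cycU p \in unit_rep_points) = has_unit_repU p.
Proof.
rewrite inE; apply/andP/hasP => [[_ /existsP[a /existsP[b]]] | [p' p'_cls units]].
  case/and3P=> /admissibleP[p' p'_adm [-> ->]] ep; rewrite !unitR_emb => units.
  by exists p'; rewrite ?mem_point_repsU ?p'_adm.
move: p'_cls; rewrite mem_point_repsU => /andP[p'_adm /eqP ep].
split; first by rewrite -ep cycU_PR.
apply/existsP; exists (emb p'.1); apply/existsP; exists (emb p'.2).
by rewrite admissible_emb p'_adm !unitR_emb units andbT; apply/eqP.
Qed.

(* Evaluated once, here, rather than in every check below: [distantU]
   recomputes the representative lists at each call. *)
Definition distant_reps : seq ((U * U) * (U * U)) := Eval vm_compute in
  [seq pq <- [seq (p, q) | p <- reps, q <- reps] | distantU pq.1 pq.2].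

Lemma distant_repsE :
  distant_reps = [seq pq <- [seq (p, q) | p <- reps, q <- reps] | distantU pq.1 pq.2].
Proof. by vm_compute. Qed.

Definition distR (p q : U * U) : bool := (p, q) \in distant_reps.

Lemma distant_reps_cycU p q :
  p \in reps -> q \in reps -> distant (cycU p) (cycU q) = distR p q.
Proof.
move=> p_rep q_rep.
by rewrite /distR distant_repsE mem_filter allpairs_f // andbT distant_cycU.
Qed.

Definition nbrR (p q : U * U) : bool := ~~ distR p q && (q != p).

Lemma nbrs_sub_PR P : nbrs P \subset PR.
Proof. by apply/subsetP => Q; rewrite inE => /andP[]. Qed.

Lemma nbrs_reps_cycU p q :
  p \in reps -> q \in reps -> (cycU q \in nbrs (cycU p)) = nbrR p q.
Proof.
move=> p_rep q_rep.
by rewrite !inE cycU_PR ?reps_admissible // distant_reps_cycU // (inj_in_eq cycU_inj).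
Qed.

Definition common_distant (a b : U * U) : seq (U * U) :=
  [seq c <- reps | distR a c && distR b c].

Lemma reps_nbrR_count : all (fun p => count (nbrR p) reps == 9) reps.
Proof. by vm_compute. Qed.

Lemma distant_reps_common_nbrR_count :
  all (fun ab => count (fun r => nbrR ab.1 r && nbrR ab.2 r) reps == 4) distant_reps.
Proof. by vm_compute. Qed.

Lemma distant_reps_no_common_nbrR3 : all (fun ab => all (fun c =>
  ~~ has (fun r => [&& nbrR ab.1 r, nbrR ab.2 r & nbrR c r]) reps)
  (common_distant ab.1 ab.2)) distant_reps.
Proof. by vm_compute. Qed.

Lemma distant_reps_no_distant4 : all (fun ab =>
  all (fun c => ~~ has (distR c) (common_distant ab.1 ab.2)) (common_distant ab.1 ab.2))
  distant_reps.
Proof. by vm_compute. Qed.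

Lemma reps_has_unit_rep_count : count has_unit_repU reps = 14.
Proof. by vm_compute. Qed.

Lemma card_PR : #|PR| = 18.
Proof.
rewrite (card_points _ predT) ?count_predT //.
by move=> p /reps_admissible/cycU_PR ->.
Qed.

Lemma card_unit_rep_points : #|unit_rep_points| = 14.
Proof.
rewrite (card_points _ has_unit_repU) ?reps_has_unit_rep_count //.
  by apply/subsetP => P; rewrite inE => /andP[].
by move=> p _; apply: unit_rep_points_cycU.
Qed.

Lemma card_nbrs P : P \in PR -> #|nbrs P| = 9.
Proof.
case/PR_reps=> p p_rep ->; rewrite (card_points _ (nbrR p)) ?nbrs_sub_PR //.
  exact/eqP/(allP reps_nbrR_count).
by move=> q q_rep; rewrite nbrs_reps_cycU.
Qed.

Lemma card_common_nbrs P Q :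
  P \in PR -> Q \in PR -> distant P Q -> #|nbrs P :&: nbrs Q| = 4.
Proof.
case/PR_reps=> p p_rep -> /PR_reps[q q_rep ->]; rewrite distant_reps_cycU // => pq.
rewrite (card_points _ (fun r => nbrR p r && nbrR q r)) ?subIset ?nbrs_sub_PR //.
  exact/eqP/(allP distant_reps_common_nbrR_count (p, q)).
by move=> r r_rep; rewrite in_setI !nbrs_reps_cycU.
Qed.

Lemma common_nbrs3_eq0 P Q S :
  P \in PR -> Q \in PR -> S \in PR -> distant P Q -> distant P S -> distant Q S ->
  nbrs P :&: nbrs Q :&: nbrs S = set0.
Proof.
case/PR_reps=> p p_rep -> /PR_reps[q q_rep ->] /PR_reps[s s_rep ->].
rewrite !distant_reps_cycU // => pq ps qs; apply: cards0_eq.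
rewrite (card_points _ (fun r => [&& nbrR p r, nbrR q r & nbrR s r]));
  rewrite ?subIset ?nbrs_sub_PR //.
  apply/eqP; rewrite -leqn0 leqNgt -has_count.
  by apply: (allP (allP distant_reps_no_common_nbrR3 (p, q) pq)); rewrite mem_filter ps qs.
by move=> r r_rep; rewrite !in_setI !nbrs_reps_cycU // andbA.
Qed.

Definition triangle : seq (U * U) := [:: (oneU, zeroU); (zeroU, oneU); (oneU, oneU)].

Lemma triangle_admissible : all (fun p => p \in admissible_pairs) triangle.
Proof. by vm_compute. Qed.

Lemma triangle_distant :
  all (fun p => all (fun q => (p == q) || distantU p q) triangle) triangle.
Proof. by vm_compute. Qed.

Lemma triangle_cycU_inj : {in triangle &, injective cycU}.
Proof.
have sep : all (fun p => all (fun q => same_cycU p q ==> (p == q)) triangle) triangle.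
  by vm_compute.
move=> p q p_in q_in /eqP; rewrite eq_cycU => same.
by apply/eqP; move: (allP (allP sep p p_in) q q_in); rewrite same.
Qed.

Lemma exists_pairwise_distant3 :
  exists S : {set {set T * T}}, [/\ S \subset PR, pairwise_distant S & #|S| = 3].
Proof.
exists [set cycU p | p in triangle]; split.
- by apply/subsetP => _ /imsetP[p /(allP triangle_admissible)/cycU_PR ? ->].
- move=> _ _ /imsetP[p p_in ->] /imsetP[q q_in ->] neq; rewrite distant_cycU.
  have /orP[/eqP pq | //] := allP (allP triangle_distant p p_in) q q_in.
  by rewrite pq eqxx in neq.
- by rewrite card_in_imset; [apply/card_uniqP | apply: triangle_cycU_inj].
Qed.

Lemma pairwise_distR_size_le3 (s : seq (U * U)) :
  {subset s <= reps} -> pairwise distR s -> (size s <= 3)%N.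
Proof.
case: s => [|a [|b [|c [|d s]]]] // s_reps.
rewrite !pairwise_cons => /andP[/allP a_dist /andP[/allP b_dist /andP[/allP c_dist _]]].
have ab : (a, b) \in distant_reps by apply: a_dist; rewrite inE eqxx.
have common x : x \in [:: c, d & s] -> x \in common_distant a b.
  move=> x_in; have x_in' : x \in [:: b, c, d & s] by rewrite in_cons x_in orbT.
  by rewrite mem_filter a_dist ?b_dist ?s_reps // in_cons x_in' orbT.
have c_common : c \in common_distant a b by rewrite common ?inE ?eqxx.
have d_common : d \in common_distant a b by rewrite common ?inE ?eqxx ?orbT.
have /hasPn/(_ d d_common) := allP (allP distant_reps_no_distant4 _ ab) c c_common.
by rewrite c_dist // inE eqxx.
Qed.

Lemma pairwise_distant_card_le3 (S : {set {set T * T}}) :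
  S \subset PR -> pairwise_distant S -> (#|S| <= 3)%N.
Proof.
move=> S_PR S_dist; rewrite (card_points _ (fun p => cycU p \in S)) // -size_filter.
set s := [seq p <- reps | cycU p \in S].
have s_reps : {subset s <= reps} by move=> p; rewrite mem_filter => /andP[].
apply: pairwise_distR_size_le3 => //.
have : pairwise [rel p q | p != q] s.
  by rewrite -uniq_pairwise filter_uniq // repsE undup_uniq.
apply: (sub_in_pairwise (P := [in s])); last exact/allP.
move=> p q p_in q_in /= neq; rewrite -distant_reps_cycU ?s_reps //.
move: p_in q_in; rewrite !mem_filter => /andP[pS p_rep] /andP[qS q_rep].
by apply: S_dist; rewrite // (inj_in_eq cycU_inj).
Qed.

Theorem mainTheorem3 :
  (* (i) *) #|PR| = 18%N /\
  (* (ii) *) #|unit_rep_points| = 14%N /\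
  (* (iii) *) (forall P, P \in PR -> #|nbrs P| = 9%N) /\
  (* (iv) *) (forall P Q, P \in PR -> Q \in PR -> distant P Q ->
                #|nbrs P :&: nbrs Q| = 4%N) /\
  (* (v) *) (forall P Q S, P \in PR -> Q \in PR -> S \in PR ->
                distant P Q -> distant P S -> distant Q S ->
                nbrs P :&: nbrs Q :&: nbrs S = set0) /\
  (* (vi) *) ((exists S : {set {set T * T}},
                 [/\ S \subset PR, pairwise_distant S & #|S| = 3%N]) /\
              (forall S : {set {set T * T}},
                 S \subset PR -> pairwise_distant S -> (#|S| <= 3)%N)).
Proof.
split; first exact: card_PR.
split; first exact: card_unit_rep_points.
split; first exact: card_nbrs.
split; first exact: card_common_nbrs.
split; first exact: common_nbrs3_eq0.
split; [exact: exists_pairwise_distant3 | exact: pairwise_distant_card_le3].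
Qed.
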